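(* Let $A=(a_{i,k})_{0\le i,k\le d-1}\in\mathbb{Z}^{d\times d}$ be a reduced idealizing matrix. Then the number of vectors $\beta\in\mathbb{Z}^d$ such that the $(d+1)\times(d+1)$ matrix $$\tilde A=\begin{pmatrix}A&\beta\\0&1\end{pmatrix}$$ is a reduced idealizing matrix equals $a_{d-1,d-1}^{\,d}$.
   Context: An idealizing matrix is an upper triangular integer matrix $A=(a_{i,k})_{0\le i,k\le d-1}$ with nonzero diagonal entries such that, for each $0\le j\le d-2$, the vector obtained by shifting the $j$-th column down by one, namely $(0,a_{0,j},a_{1,j},\dots,a_{d-2,j})^T$, lies in the $\mathbb{Z}$-span of columns $0,1,\dots,j+1$ of $A$. It is called reduced if its diagonal entries are positive and, in every row $i$, the entries $a_{i,k}$ with $k>i$ satisfy $0\le a_{i,k}\le a_{i,i}-1$. *)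

From HB Require Import structures.
From mathcomp Require Import all_boot all_order all_algebra.
Set Implicit Arguments. Unset Strict Implicit. Unset Printing Implicit Defensive.
Import Order.TTheory GRing.Theory Num.Theory.
Local Open Scope ring_scope.

(* Matrices of size d = m.+1 (indices 0..m). *)

Definition shiftcol (m : nat) (A : 'M[int]_m.+1) (j i : 'I_m.+1) : int :=
  if (i : nat) == 0%N then 0 else A (inord i.-1) j.

Definition upper_triangular (m : nat) (A : 'M[int]_m.+1) : Prop :=
  forall i j : 'I_m.+1, (j < i)%N -> A i j = 0.

Definition idealizing (m : nat) (A : 'M[int]_m.+1) : Prop :=
  upper_triangular A /\
  (forall i : 'I_m.+1, A i i != 0) /\
  (forall j : 'I_m.+1, (j < m)%N ->
     exists c : 'I_m.+1 -> int,
       forall i : 'I_m.+1,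
         shiftcol A j i = \sum_(k : 'I_m.+1 | (k <= j.+1)%N) c k * A i k).

Definition reduced (m : nat) (A : 'M[int]_m.+1) : Prop :=
  (forall i : 'I_m.+1, 0 < A i i) /\
  (forall i k : 'I_m.+1, (i < k)%N -> 0 <= A i k <= A i i - 1).

Definition reduced_idealizing (m : nat) (A : 'M[int]_m.+1) : Prop :=
  idealizing A /\ reduced A.

Definition ext_mx (n : nat) (A : 'M[int]_n.+1) (beta : 'cV[int]_n.+1)
  : 'M[int]_(n.+1 + 1) :=
  block_mx A beta 0 1%:M.

(* Write a := a_{d-1,d-1} and w for the shifted last column of A.  Adjoining the
   column beta only adds one idealizing condition, for column d-1; its last row
   forces the coefficient of the new column to be a, so the condition becomes
   a * beta - w \in A Z^d, while reducedness asks 0 <= beta_i < a_{i,i}.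
   The idealizing relations show that a_{j,j} divides every entry of the columns
   0..j, so a divides all of A and w.  Solving A c = a * beta - w by back
   substitution, row i is solvable iff a_{i,i} divides a * beta_i minus terms
   that are multiples of a; as a divides a_{i,i}, exactly a of the values
   beta_i in [0, a_{i,i}) qualify, whence a^d vectors beta. *)

From HB Require Import structures.
From mathcomp Require Import all_boot all_order all_algebra.
Import Order.TTheory GRing.Theory Num.Theory.
Set Implicit Arguments.
Unset Strict Implicit.
Unset Printing Implicit Defensive.
Local Open Scope ring_scope.

Lemma count_modn_iota (q r k : nat) : (r < q)%N ->
  count (fun x => x %% q == r)%N (iota 0 (q * k)) = k.
Proof.
move=> rq; elim: k => [|k IH]; first by rewrite muln0.
rewrite mulnSr iotaD count_cat IH add0n.
have -> : iota (q * k) q = [seq (q * k + i)%N | i <- iota 0 q].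
  by rewrite -iotaDl addn0.
rewrite count_map.
have -> : count (preim (addn (q * k)) (fun x : nat => x %% q == r)%N) (iota 0 q)
        = count (pred1 r) (iota 0 q).
  apply: eq_in_count => x; rewrite mem_iota add0n => /andP[_ xq] /=.
  by rewrite mulnC modnMDl modn_small.
by rewrite count_uniq_mem ?iota_uniq // mem_iota add0n rq addn1.
Qed.

(* Writing D = a * q and K = a * K', the condition says x = K' mod q, and
   [0, |D|) consists of |a| periods of length q. *)
Lemma count_dvdz_affine (a D K : int) : 0 < a -> 0 < D -> (a %| D)%Z -> (a %| K)%Z ->
  count (fun x : nat => (D %| a * x%:Z - K)%Z) (iota 0 `|D|%N) = `|a|%N.
Proof.
move=> a0 D0 aD aK.
have [q Dq] : exists q, D = a * q%:Z.
  exists `|(D %/ a)%Z|%N.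
  by rewrite gez0_abs ?divz_ge0 ?ltW // mulrC divzK.
have [K' KK] : exists K', K = a * K' by exists (K %/ a)%Z; rewrite mulrC divzK.
have q0 : (0 < q)%N by move: D0; rewrite Dq pmulr_rgt0 // ltz_nat.
have qn0 : q%:Z != 0 by rewrite eqz_nat -lt0n.
pose r := `|(K' %% q%:Z)%Z|%N.
have rq : (r < q)%N.
  rewrite -ltz_nat /r gez0_abs ?modz_ge0 //.
  by rewrite -[X in _ < X]gez0_abs ?ltz_pmod // ltW // ltz_nat.
have -> : `|D|%N = (q * `|a|)%N by rewrite Dq abszM /= mulnC.
rewrite -[RHS](count_modn_iota _ rq); apply: eq_count => x /=.
rewrite Dq KK -mulrBr dvdz_mul2l ?(gt_eqF a0) //.
rewrite -eqz_mod_dvd modz_nat /r -eqz_nat gez0_abs ?modz_ge0 //.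
Qed.

Fixpoint box (ds : seq nat) : seq (seq int) :=
  if ds is d :: ds' then [seq (x%:Z) :: l | l <- box ds', x <- iota 0 d]
  else [:: [::]].

Lemma mem_box ds l : l \in box ds <->
  size l = size ds /\ forall i, (i < size ds)%N -> 0 <= l`_i < (nth 0%N ds i)%:Z.
Proof.
elim: ds l => [|d ds IH] l /=.
  rewrite inE; split; first by move/eqP->.
  by case=> /size0nil ->.
split.
  case/allpairsP=> [[l' x]] /= [/IH [sz H] xi ->]; split; first by rewrite /= sz.
  move=> [|i] /=; last by rewrite ltnS; apply: H.
  by move: xi; rewrite mem_iota add0n ltz_nat /=.
case: l => [|y l'] [//= sz H].
apply/allpairsP; exists (l', `|y|%N) => /=.
have y0 : 0 <= y by have /andP[] := H 0%N isT.
split; last by rewrite gez0_abs.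
  by apply/IH; split; [case: sz | move=> i ilt; apply: (H i.+1)].
rewrite mem_iota add0n -ltz_nat gez0_abs //.
by have /andP[] := H 0%N isT.
Qed.

Lemma box_uniq ds : uniq (box ds).
Proof.
elim: ds => [|d ds IH] //=.
apply: allpairs_uniq => //; first exact: iota_uniq.
by move=> [l1 x1] [l2 x2] _ _ /= [-> ->].
Qed.

Lemma sumn_count_mul (T : Type) (P : pred T) (k : nat) (s : seq T) :
  sumn [seq (P x * k)%N | x <- s] = (count P s * k)%N.
Proof. by elim: s => //= x s ->; rewrite mulnDl. Qed.

Section BackSubstitution.
Variables (M : nat -> nat -> int) (w : nat -> int) (a : int) (N : nat).

(* [back_subst r l] solves rows [r], ..., [N - 1] of the upper triangular system
   [\sum_(i <= k < N) M i k * c k = a * l`_(i - r) - w i] from the bottom up; it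
   fails as soon as a pivot [M i i] does not divide the remaining right-hand side. *)
Fixpoint back_subst (r : nat) (l : seq int) : option (seq int) :=
  match l with
  | [::] => Some [::]
  | x :: l' =>
    match back_subst r.+1 l' with
    | None => None
    | Some cs =>
      let t := a * x - w r - \sum_(r.+1 <= k < N) M r k * cs`_(k - r.+1) in
      if (M r r %| t)%Z then Some ((t %/ M r r)%Z :: cs) else None
    end
  end.

Lemma count_back_subst m r : 0 < a -> (forall i k, (a %| M i k)%Z) ->
  (forall i, (a %| w i)%Z) -> (forall i, (r <= i)%N -> 0 < M i i) ->
  count (fun l => back_subst r l != None)
    (box [seq `|M i i|%N | i <- iota r m]) = (`|a| ^ m)%N.
Proof.
move=> a0 aM aw Mpos; elim: m r Mpos => [|m IH] r Mpos //=.
rewrite count_flatten -map_comp.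
rewrite (eq_map (g := fun l => ((back_subst r.+1 l != None) * `|a|)%N)); last first.
  move=> l; rewrite /comp count_map.
  case E: (back_subst r.+1 l) => [cs|]; last first.
    rewrite mul0n (@eq_count _ _ pred0) ?count_pred0 //.
    by move=> x; rewrite /preim /= E.
  have hK : (a %| w r + \sum_(r.+1 <= k < N) M r k * cs`_(k - r.+1))%Z.
    by rewrite rpredD // rpred_sum // => k _; apply: dvdz_mulr.
  rewrite mul1n -(count_dvdz_affine a0 (Mpos r (leqnn r)) (aM r r) hK).
  apply: eq_count => x; rewrite /preim /= E opprD addrA.
  by case: ifP.
rewrite sumn_count_mul IH ?expnS 1?mulnC // => i ri; apply: Mpos; exact: ltnW.
Qed.

Lemma back_subst_complete r l (c : nat -> int) : (r + size l = N)%N ->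
  (forall i, (r <= i < N)%N -> M i i != 0) ->
  (forall i, (r <= i < N)%N ->
     \sum_(i <= k < N) M i k * c k = a * l`_(i - r) - w i) ->
  back_subst r l = Some [seq c k | k <- iota r (size l)].
Proof.
elim: l r => [|x l IH] r //= rN Mnz Hc.
rewrite (IH r.+1); first last.
- move=> i /andP[ri iN]; rewrite Hc ?(ltnW ri) ?iN //.
  by rewrite -(subnSK ri).
- by move=> i /andP[ri iN]; apply: Mnz; rewrite iN (ltnW ri).
- by rewrite addSnnS.
have rN' : (r < N)%N by rewrite -rN addnS ltnS leq_addr.
have -> : \sum_(r.+1 <= k < N) M r k * [seq c k | k <- iota r.+1 (size l)]`_(k - r.+1)
        = \sum_(r.+1 <= k < N) M r k * c k.
  apply: eq_big_nat => k /andP[rk kN].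
  rewrite (nth_map 0%N); last by rewrite size_iota -(ltn_add2l r.+1) subnKC // addSnnS rN.
  by rewrite nth_iota ?subnKC // -(ltn_add2l r.+1) subnKC // addSnnS rN.
have := Hc r; rewrite leqnn rN' subnn /= => /(_ isT).
rewrite big_ltn // => Hr.
have -> : a * x - w r - \sum_(r.+1 <= k < N) M r k * c k = M r r * c r.
  by rewrite -Hr addrK.
by rewrite dvdz_mulr ?dvdzz // mulKz // Mnz // leqnn rN'.
Qed.

Lemma back_subst_sound r l cs : (r + size l = N)%N ->
  back_subst r l = Some cs ->
  size cs = size l /\ forall i, (r <= i < N)%N ->
     \sum_(i <= k < N) M i k * cs`_(k - r) = a * l`_(i - r) - w i.
Proof.
elim: l r cs => [|x l IH] r cs /= rN.
  case=> <-; split=> // i /andP[ri iN].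
  by move: iN; rewrite -rN addn0 ltnNge ri.
case E: (back_subst r.+1 l) => [cs'|] //; case: ifP => // dv [<-].
have rN1 : (r.+1 + size l = N)%N by rewrite addSnnS.
have [sz Hs] := IH _ _ rN1 E.
split; first by rewrite /= sz.
move=> i /andP[ri iN].
set q := (_ %/ _)%Z.
have shift : forall j, (r < j)%N -> (cs'`_(j - r.+1)) = ((q :: cs')`_(j - r)).
  by move=> j rj; rewrite -(subnSK rj).
case: (ltngtP r i) ri => // [ri|ri] _.
  rewrite -(subnSK ri) /= -(Hs i); last by rewrite ri.
  apply: eq_big_nat => k /andP[ik _]; rewrite -shift //.
  exact: leq_trans ri ik.
subst i; rewrite big_ltn // subnn /= /q mulrC divzK //.
have -> : \sum_(r.+1 <= k < N) M r k * (q :: cs')`_(k - r)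
        = \sum_(r.+1 <= k < N) M r k * cs'`_(k - r.+1).
  by apply: eq_big_nat => k /andP[rk _]; rewrite -shift.
by rewrite subrK.
Qed.

End BackSubstitution.

Section IdealizingDivisibility.
Variables (n : nat) (A : 'M[int]_n.+1).
Hypothesis IA : idealizing A.

Lemma idealizing_diag_dvdz_succ (J K : 'I_n.+1) : K = J.+1 :> nat ->
  (forall k i : 'I_n.+1, (k <= J)%N -> (A J J %| A i k)%Z) ->
  forall k i : 'I_n.+1, (k <= K)%N -> (A K K %| A i k)%Z.
Proof.
have [UT [Dnz Hid]] := IA; move=> KE IH.
have [|c Hc] := Hid J; first by rewrite -ltnS -KE.
have colJ i : shiftcol A J i = c K * A i K + \sum_(k : 'I_n.+1 | (k <= J)%N) c k * A i k.
  rewrite Hc (bigD1 K) /=; last by rewrite KE.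
  congr (_ + _); apply: eq_bigl => k.
  have -> : (k != K) = (val k != J.+1) by rewrite -KE.
  by rewrite andbC -ltn_neqAle.
have AJJ : A J J = c K * A K K.
  have := colJ K; rewrite big1 => [|k kJ]; last by rewrite UT ?mulr0 // KE ltnS.
  rewrite addr0 /shiftcol KE /= => <-; congr (A _ J); apply/val_inj.
  by rewrite /= inordK // (leq_trans (leqnSn _)) // -KE.
have cK : c K != 0 by apply: contra (Dnz J) => /eqP c0; rewrite AJJ c0 mul0r.
have dvdK i : (A K K %| A i K)%Z.
  rewrite -(dvdz_mul2l cK) -AJJ.
  have -> : c K * A i K = shiftcol A J i - \sum_(k : 'I_n.+1 | (k <= J)%N) c k * A i k.
    by rewrite colJ addrK.
  apply: rpredB; last by apply: rpred_sum => k kJ; apply/dvdz_mull/IH.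
  by rewrite /shiftcol; case: ifP => _; [exact: dvdz0 | exact: IH].
move=> k i; rewrite leq_eqVlt => /orP[/eqP kK | ].
  by have -> : k = K by apply: val_inj.
rewrite KE ltnS => kJ; apply: (@dvdz_trans (A J J)); last exact: IH.
by rewrite AJJ dvdz_mull.
Qed.

Lemma idealizing_diag_dvdz (j k i : 'I_n.+1) : (k <= j)%N -> (A j j %| A i k)%Z.
Proof.
have [UT _] := IA; move: k i; case: j => j; elim: j => [|j IHj] jn k i /=.
  rewrite leqn0 => /eqP k0; have -> : k = Ordinal jn by apply: val_inj.
  have [-> | i0] := eqVneq i (Ordinal jn); first exact: dvdzz.
  by rewrite UT ?dvdz0 // lt0n; apply: contraNN i0 => /eqP i0; apply/eqP/val_inj.
exact: (idealizing_diag_dvdz_succ (J := Ordinal (ltnW jn)) (K := Ordinal jn) erefl (IHj _)).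
Qed.

End IdealizingDivisibility.

Definition in_col_span n (A : 'M[int]_n.+1) (v : 'I_n.+1 -> int) : Prop :=
  exists c : 'I_n.+1 -> int, forall i, \sum_k A i k * c k = v i.

(* The idealizing condition of [ext_mx A b] at column d-1, with the coefficient
   of the new column already forced to be a_{d-1,d-1}. *)
Definition last_col_cond n (A : 'M[int]_n.+1) (b : 'cV[int]_n.+1) : Prop :=
  in_col_span A (fun i => A ord_max ord_max * b i 0 - shiftcol A ord_max i).

Section ExtendedMatrix.
Variables (n : nat) (A : 'M[int]_n.+1) (b : 'cV[int]_n.+1).

Local Notation E := (ext_mx A b).
Local Notation lsh := (@lshift n.+1 1).
Local Notation last := (@rshift n.+1 1 0).

Lemma ext_mxEul i k : E (lsh i) (lsh k) = A i k.
Proof. exact: block_mxEul. Qed.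

Lemma ext_mxEur i : E (lsh i) last = b i 0.
Proof. by rewrite [LHS]block_mxEur. Qed.

Lemma ext_mxEdl k : E last (lsh k) = 0.
Proof. by rewrite [LHS]block_mxEdl mxE. Qed.

Lemma ext_mxEdr : E last last = 1.
Proof. by rewrite [LHS]block_mxEdr mxE. Qed.

Lemma inord_lshift (k : nat) : (k < n.+1)%N ->
  (inord k : 'I_(n.+1 + 1)) = lsh (inord k).
Proof.
by move=> kn; apply: val_inj; rewrite /= !inordK //; exact: (ltn_addr 1 kn).
Qed.

Lemma shiftcol_ext_mx_lshift j i : shiftcol E (lsh j) (lsh i) = shiftcol A j i.
Proof.
rewrite /shiftcol /=; case: ifP => // i0.
by rewrite inord_lshift ?ext_mxEul // (leq_ltn_trans (leq_pred _)).
Qed.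

Lemma shiftcol_ext_mx_last j : shiftcol E (lsh j) last = A ord_max j.
Proof.
rewrite /shiftcol /= addn0 inord_lshift // ext_mxEul.
by congr (A _ j); apply/val_inj; rewrite /= inordK.
Qed.

Lemma sum_ext_mx_leq (c : 'I_(n.+1 + 1) -> int) (J : nat) i :
  \sum_(k : 'I_(n + 1).+1 | (k <= J)%N) c k * E i k =
  \sum_(k : 'I_n.+1 | (k <= J)%N) c (lsh k) * E i (lsh k)
  + (if (n.+1 <= J)%N then c last * E i last else 0).
Proof.
by rewrite (@big_split_ord _ _ _ n.+1 1) /= [X in _ + X = _]big_mkcond big_ord1 /= addn0.
Qed.

Lemma sum_ext_mx (c : 'I_(n.+1 + 1) -> int) i :
  \sum_(k : 'I_(n + 1).+1 | (k <= n.+1)%N) c k * E i k =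
  \sum_k c (lsh k) * E i (lsh k) + c last * E i last.
Proof.
rewrite sum_ext_mx_leq leqnn; congr (_ + _).
by apply: eq_bigl => k; rewrite ltnW.
Qed.

Lemma upper_triangular_ext_mx : upper_triangular A -> @upper_triangular (n + 1) E.
Proof.
move=> UT i j; case: (@split_ordP n.+1 1 i) => i' ->;
  case: (@split_ordP n.+1 1 j) => j' -> /=; rewrite ?(ord1 i') ?(ord1 j').
- by rewrite ext_mxEul; apply: UT.
- by rewrite addn0 ltnNge ltnW.
- by rewrite ext_mxEdl.
- by rewrite ltnn.
Qed.

Lemma ext_mx_diag_neq0 : (forall i, A i i != 0) -> forall i : 'I_(n + 1).+1, E i i != 0.
Proof.
move=> Dnz i; case: (@split_ordP n.+1 1 i) => i' ->; rewrite ?(ord1 i').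
  by rewrite ext_mxEul.
by rewrite ext_mxEdr oner_eq0.
Qed.

Lemma reduced_ext_mxP : reduced A ->
  @reduced (n + 1) E <-> forall i, 0 <= b i 0 < A i i.
Proof.
move=> [Dpos Red]; split=> [[_ RedE] i | Hb].
  have := RedE (lsh i) last; rewrite ext_mxEur ext_mxEul /= addn0 ltn_ord.
  by rewrite lerBrDr lezD1; apply.
split=> [i | i k].
  case: (@split_ordP n.+1 1 i) => i' ->; rewrite ?(ord1 i').
    by rewrite ext_mxEul.
  by rewrite ext_mxEdr.
case: (@split_ordP n.+1 1 i) => i' ->; case: (@split_ordP n.+1 1 k) => k' -> /=;
  rewrite ?(ord1 i') ?(ord1 k') ?ext_mxEul ?ext_mxEur.
- exact: Red.
- by rewrite lerBrDr lezD1 Hb.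
- by rewrite ltnNge addn0 ltnW.
- by rewrite ltnn.
Qed.

Local Notation a := (A ord_max ord_max).

Lemma idealizing_ext_mx : idealizing A -> last_col_cond A b -> @idealizing (n + 1) E.
Proof.
move=> [UT [Dnz HidA]] [c0 Hc0]; split; [exact: upper_triangular_ext_mx|split].
  exact: ext_mx_diag_neq0.
move=> j; case: (@split_ordP n.+1 1 j) => [j' -> _ | j' ->]; last first.
  by rewrite /= ltnNge => /negP[]; rewrite addn1 leq_addr.
have [jn | jn] := ltnP j' n; last first.
  have {jn} -> : j' = ord_max by apply/val_inj/eqP; rewrite eqn_leq jn -ltnS ltn_ord.
  exists (fun k => if split k is inl k' then - c0 k' else a) => i.
  rewrite sum_ext_mx (unsplitK (inr _ 0)).
  under eq_bigr => k _ do rewrite (unsplitK (inl _ k)) mulNr.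
  case: (@split_ordP n.+1 1 i) => i' ->; rewrite ?(ord1 i').
    rewrite ext_mxEur shiftcol_ext_mx_lshift sumrN.
    under eq_bigr do rewrite ext_mxEul mulrC.
    by rewrite Hc0 opprB subrK.
  rewrite ext_mxEdr shiftcol_ext_mx_last mulr1 big1 ?oppr0 ?add0r.
    by congr (A _ _); apply: val_inj.
  by move=> k _; rewrite ext_mxEdl mulr0.
have [cA HcA] := HidA j' jn.
exists (fun k => if split k is inl k' then cA k' else 0) => i.
rewrite sum_ext_mx_leq /= ltnS leqNgt jn /= addr0.
under eq_bigr => k _ do rewrite (unsplitK (inl _ k)).
case: (@split_ordP n.+1 1 i) => i' ->; rewrite ?(ord1 i').
  by rewrite shiftcol_ext_mx_lshift HcA; under eq_bigr do rewrite ext_mxEul.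
rewrite shiftcol_ext_mx_last UT ?big1 // => k _.
by rewrite ext_mxEdl mulr0.
Qed.

Lemma last_col_cond_ext_mx : @idealizing (n + 1) E -> last_col_cond A b.
Proof.
move=> [_ [_ HidE]].
have [|c Hc] := HidE (lsh ord_max); first by rewrite /= addn1.
have ca : c last = a.
  have := Hc last; rewrite sum_ext_mx shiftcol_ext_mx_last ext_mxEdr mulr1 big1 ?add0r.
    by move=> <-.
  by move=> k _; rewrite ext_mxEdl mulr0.
exists (fun k => - c (lsh k)) => i.
have := Hc (lsh i); rewrite sum_ext_mx shiftcol_ext_mx_lshift ext_mxEur ca => ->.
rewrite opprD addrCA subrr addr0 -sumrN; apply: eq_bigr => k _.
by rewrite ext_mxEul mulrN mulrC.
Qed.

Lemma reduced_idealizing_ext_mxP : reduced_idealizing A ->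
  @reduced_idealizing (n + 1) E <->
  (forall i, 0 <= b i 0 < A i i) /\ last_col_cond A b.
Proof.
move=> [IA RA]; split=> [[IE RE] | [Hb Hc]].
  by split; [apply/(reduced_ext_mxP RA) | exact: last_col_cond_ext_mx].
by split; [exact: idealizing_ext_mx | apply/(reduced_ext_mxP RA)].
Qed.

End ExtendedMatrix.

Lemma sum_upper_triangular n (A : 'M[int]_n.+1) (c : 'I_n.+1 -> int) i :
  upper_triangular A ->
  \sum_k A i k * c k = \sum_(i <= k < n.+1) A i (inord k) * c (inord k).
Proof.
move=> UT; have -> : \sum_k A i k * c k = \sum_(0 <= k < n.+1) A i (inord k) * c (inord k).
  by rewrite big_mkord; apply: eq_bigr => k _; rewrite inord_val.
rewrite (big_cat_nat (leq0n i) (ltnW (ltn_ord i))) //= big1_seq ?add0r // => k.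
by rewrite mem_index_iota => /andP[_ ki]; rewrite UT ?mul0r // inordK // (ltn_trans ki).
Qed.

Section ExtColumns.
Variables (n : nat) (A : 'M[int]_n.+1).

Local Notation a := (A ord_max ord_max).
Local Notation col_seq b := [seq b i 0 | i <- enum 'I_n.+1].
Local Notation diag_bounds := [seq `|A i i|%N | i <- enum 'I_n.+1].
Local Notation solvable l :=
  (back_subst (fun i k => A (inord i) (inord k))
     (fun i => shiftcol A ord_max (inord i)) a n.+1 0 l != None).

Definition ext_columns : seq 'cV[int]_n.+1 :=
  [seq b : 'cV[int]_n.+1 <- [seq \col_i l`_i | l <- box diag_bounds] | solvable (col_seq b)].

Lemma nth_col_seq (b : 'cV[int]_n.+1) (i : 'I_n.+1) : (col_seq b)`_i = b i 0.
Proof. by rewrite (nth_map ord0) ?size_enum_ord // nth_ord_enum. Qed.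

Lemma col_seqK (b : 'cV[int]_n.+1) : \col_i (col_seq b)`_i = b.
Proof. by apply/matrixP => i j; rewrite (ord1 j) mxE nth_col_seq. Qed.

Lemma col_seq_colK (l : seq int) : size l = n.+1 -> col_seq (\col_i l`_i) = l.
Proof.
move=> sz; apply: (@eq_from_nth _ 0); first by rewrite size_map size_enum_ord.
move=> i; rewrite size_map size_enum_ord => ilt.
by rewrite -[i]/(val (Ordinal ilt)) nth_col_seq mxE.
Qed.

Hypothesis RI : reduced_idealizing A.

Lemma mem_box_diag l :
  l \in box diag_bounds <-> size l = n.+1 /\ forall i : 'I_n.+1, 0 <= l`_i < A i i.
Proof.
have [_ [Dpos _]] := RI; have absA i : `|A i i|%N = A i i :> int by rewrite gez0_abs ?ltW.
split=> [/mem_box | [sz Hl]].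
  rewrite size_map size_enum_ord => -[sz Hl]; split=> // i; have := Hl i (ltn_ord i).
  by rewrite (nth_map ord0) ?size_enum_ord // nth_ord_enum absA.
apply/mem_box; rewrite size_map size_enum_ord; split=> // i ilt.
by rewrite (nth_map ord0) ?size_enum_ord // -[i]/(val (Ordinal ilt)) nth_ord_enum absA Hl.
Qed.

Lemma mem_col_box (b : 'cV[int]_n.+1) :
  b \in [seq \col_i l`_i | l <- box diag_bounds] <-> forall i, 0 <= b i 0 < A i i.
Proof.
split=> [/mapP [l /mem_box_diag [_ Hl] ->] i | Hb]; first by rewrite mxE.
apply/mapP; exists (col_seq b); last by rewrite col_seqK.
apply/mem_box_diag; split=> [|i]; first by rewrite size_map size_enum_ord.
by rewrite nth_col_seq.
Qed.

Lemma back_subst_last_col_cond (b : 'cV[int]_n.+1) :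
  solvable (col_seq b) <-> last_col_cond A b.
Proof.
have [[UT [Dnz _]] _] := RI.
have sz : (0 + size (col_seq b) = n.+1)%N by rewrite add0n size_map size_enum_ord.
split.
  case E: back_subst => [cs|] // _; have [_ Hs] := back_subst_sound sz E.
  exists (fun k => cs`_k) => i; rewrite sum_upper_triangular //.
  have := Hs i; rewrite ltn_ord subn0 nth_col_seq inord_val => /(_ isT) <-.
  by apply: eq_big_nat => k /andP[_ kn]; rewrite subn0 inordK.
case=> c Hc; rewrite (back_subst_complete (c := fun k => c (inord k))) // => i.
  case/andP=> _ ilt; rewrite subn0 -[i]/(val (Ordinal ilt)) nth_col_seq inord_val.
  by rewrite -sum_upper_triangular.
Qed.

Lemma mem_ext_columns (b : 'cV[int]_n.+1) : b \in ext_columns <->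
  (forall i, 0 <= b i 0 < A i i) /\ last_col_cond A b.
Proof.
rewrite mem_filter; split.
  by case/andP=> /back_subst_last_col_cond Hc /mem_col_box Hb.
by case=> /mem_col_box Hb /back_subst_last_col_cond Hc; apply/andP.
Qed.

Lemma uniq_ext_columns : uniq ext_columns.
Proof.
apply: filter_uniq; rewrite map_inj_in_uniq ?box_uniq //.
move=> l1 l2 /mem_box_diag[sz1 _] /mem_box_diag[sz2 _] E.
by rewrite -(col_seq_colK sz1) -(col_seq_colK sz2) E.
Qed.

Lemma size_ext_columns : (size ext_columns)%:Z = a ^+ n.+1.
Proof.
have [IA [Dpos _]] := RI.
have dvd_a i k : (a %| A i k)%Z by apply: idealizing_diag_dvdz; rewrite ?leq_ord.
rewrite size_filter count_map (eq_in_count (a2 := fun l => solvable l)); last first.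
  by move=> l /mem_box_diag[sz _]; rewrite /preim /= col_seq_colK.
have -> : diag_bounds = [seq `|A (inord i) (inord i)|%N | i <- iota 0 n.+1].
  by rewrite -val_enum_ord -map_comp; apply: eq_map => i /=; rewrite inord_val.
rewrite count_back_subst //; last first.
  by move=> i; rewrite /shiftcol; case: ifP => _; [exact: dvdz0 | exact: dvd_a].
by rewrite -[in RHS](gez0_abs (ltW (Dpos _))) -!natz natrX.
Qed.

End ExtColumns.

Theorem lemma3p1 (n : nat) (A : 'M[int]_n.+1) :
  reduced_idealizing A ->
  exists s : seq 'cV[int]_n.+1,
    [/\ uniq s,
        (forall beta : 'cV[int]_n.+1,
            beta \in s <-> @reduced_idealizing (n + 1)%N (ext_mx A beta))
      & (size s)%:Z = A ord_max ord_max ^+ n.+1].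
Proof.
move=> RI; exists (ext_columns A); split.
- exact: uniq_ext_columns.
- move=> b; apply: iff_trans (mem_ext_columns RI b) _.
  exact: iff_sym (reduced_idealizing_ext_mxP b RI).
- exact: size_ext_columns.
Qed.
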